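(* Let $A$ be a closed $\forall^+$ type of system $\mathcal F$ which is provable, i.e. there is a closed $\lambda$-term $u$ with $\vdash_{\mathcal F} u : A$. Then $A$ is a data type: $|A|\neq\emptyset$ and every $t\in|A|$ $\beta$-reduces to a closed $\lambda$-term.
   Context: $\lambda$-terms are those of the untyped $\lambda$-calculus ($\Lambda$ their set); $u\succ_f v$ means $v$ is obtained from $u$ by weak head reduction (repeatedly reducing the redex $(\lambda x u)v$ in a term $(\lambda x u)vv_1\dots v_m$). Types of system $\mathcal F$: built from type variables with $\rightarrow$, $\forall$; only proper types (in every $\forall XA$, $X$ occurs free in $A$). Typing: (ax) $\Gamma \vdash x_i : A_i$ for $x_i:A_i\in\Gamma$; ($\rightarrow_i$) from $\Gamma, x:B \vdash t : C$ infer $\Gamma \vdash \lambda x t : B \rightarrow C$; ($\rightarrow_e$) from $\Gamma \vdash u : B\rightarrow C$, $\Gamma \vdash v : B$ infer $\Gamma \vdash (u)v : C$; ($\forall_i$) from $\Gamma \vdash t : A$, $X$ not free in $\Gamma$, infer $\Gamma \vdash t : \forall X A$; ($\forall_e$) from $\Gamma \vdash t : \forall X A$ infer $\Gamma \vdash t : A[C/X]$. A set $G\subseteq\Lambda$ is saturated if $u\in G$ and $t\succ_f u$ imply $t\in G$. For $G,G'\subseteq\Lambda$, $G\rightarrow G'=\{u : (u)t\in G' \text{ for all } t\in G\}$. An interpretation $I$ maps each type variable to a saturated set; $|A\rightarrow B|_I=|A|_I\rightarrow|B|_I$, $|\forall XA|_I=\bigcap\{|A|_{I[X\leftarrow G]}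 : G \text{ saturated}\}$, and $|A|=\bigcap_I|A|_I$. The classes $\forall^+$, $\forall^-$: every type variable is both; if $A$ is $\forall^+$ (resp. $\forall^-$) and $B$ is $\forall^-$ (resp. $\forall^+$) then $B\rightarrow A$ is $\forall^+$ (resp. $\forall^-$); if $A$ is $\forall^+$ and $X$ is free in $A$ then $\forall XA$ is $\forall^+$. *)

From Stdlib Require Import Arith List Relations.
Import ListNotations.

Inductive term : Type :=
| Var : nat -> term
| App : term -> term -> term
| Lam : term -> term.

Fixpoint lift (d c : nat) (t : term) : term :=
  match t with
  | Var m => if m <? c then Var m else Var (m + d)
  | App t1 t2 => App (lift d c t1) (lift d c t2)
  | Lam t1 => Lam (lift d (S c) t1)
  end.

(* subst k u t : t[u/k], indices above k are decremented *)
Fixpoint subst (k : nat) (u : term) (t : term) : term :=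
  match t with
  | Var m => if m <? k then Var m
             else if m =? k then lift k 0 u
             else Var (m - 1)
  | App t1 t2 => App (subst k u t1) (subst k u t2)
  | Lam t1 => Lam (subst (S k) u t1)
  end.

Fixpoint closed_at (k : nat) (t : term) : Prop :=
  match t with
  | Var m => m < k
  | App t1 t2 => closed_at k t1 /\ closed_at k t2
  | Lam t1 => closed_at (S k) t1
  end.

Definition closed (t : term) : Prop := closed_at 0 t.

(** One step of weak head reduction:
    (\x u) v v1 ... vm  ->  u[v/x] v1 ... vm *)
Inductive whstep : term -> term -> Prop :=
| wh_beta : forall t u, whstep (App (Lam t) u) (subst 0 u t)
| wh_app : forall t t' v, whstep t t' -> whstep (App t v) (App t' v).

Definition whred : term -> term -> Prop := clos_refl_trans term whstep.

Inductive bstep : term -> term -> Prop :=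
| b_beta : forall t u, bstep (App (Lam t) u) (subst 0 u t)
| b_appl : forall t t' v, bstep t t' -> bstep (App t v) (App t' v)
| b_appr : forall t v v', bstep v v' -> bstep (App t v) (App t v')
| b_lam : forall t t', bstep t t' -> bstep (Lam t) (Lam t').

Definition betared : term -> term -> Prop := clos_refl_trans term bstep.

Inductive ty : Type :=
| TVar : nat -> ty
| Arr : ty -> ty -> ty
| All : ty -> ty.

Fixpoint tlift (d c : nat) (A : ty) : ty :=
  match A with
  | TVar m => if m <? c then TVar m else TVar (m + d)
  | Arr A1 A2 => Arr (tlift d c A1) (tlift d c A2)
  | All A1 => All (tlift d (S c) A1)
  end.

Fixpoint tsubst (k : nat) (C : ty) (A : ty) : ty :=
  match A with
  | TVar m => if m <? k then TVar m
              else if m =? k then tlift k 0 C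
              else TVar (m - 1)
  | Arr A1 A2 => Arr (tsubst k C A1) (tsubst k C A2)
  | All A1 => All (tsubst (S k) C A1)
  end.

Fixpoint occurs_free (k : nat) (A : ty) : Prop :=
  match A with
  | TVar m => m = k
  | Arr A1 A2 => occurs_free k A1 \/ occurs_free k A2
  | All A1 => occurs_free (S k) A1
  end.

Fixpoint tclosed_at (k : nat) (A : ty) : Prop :=
  match A with
  | TVar m => m < k
  | Arr A1 A2 => tclosed_at k A1 /\ tclosed_at k A2
  | All A1 => tclosed_at (S k) A1
  end.

Definition tclosed (A : ty) : Prop := tclosed_at 0 A.

Fixpoint proper (A : ty) : Prop :=
  match A with
  | TVar _ => True
  | Arr A1 A2 => proper A1 /\ proper A2
  | All A1 => occurs_free 0 A1 /\ proper A1
  end.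

Inductive typing : list ty -> term -> ty -> Prop :=
| T_ax : forall G i A, nth_error G i = Some A -> typing G (Var i) A
| T_arr_i : forall G t B C, proper B -> typing (B :: G) t C -> typing G (Lam t) (Arr B C)
| T_arr_e : forall G u v B C, typing G u (Arr B C) -> typing G v B -> typing G (App u v) C
| T_all_i : forall G t A, occurs_free 0 A ->
    typing (map (tlift 1 0) G) t A -> typing G t (All A)
| T_all_e : forall G t A C, proper C -> typing G t (All A) -> typing G t (tsubst 0 C A).

Definition saturated (G : term -> Prop) : Prop :=
  forall t u, G u -> whred t u -> G t.

Definition arrow_set (G G' : term -> Prop) : term -> Prop :=
  fun u => forall t, G t -> G' (App u t).

Definition scons (G : term -> Prop) (I : nat -> term -> Prop) : nat -> term -> Prop :=
  fun n => match n with 0 => G | S n' => I n' end.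

Fixpoint interp (I : nat -> term -> Prop) (A : ty) : term -> Prop :=
  match A with
  | TVar n => I n
  | Arr A1 A2 => arrow_set (interp I A1) (interp I A2)
  | All A1 => fun u => forall G, saturated G -> interp (scons G I) A1 u
  end.

Definition interpretation (I : nat -> term -> Prop) : Prop :=
  forall n, saturated (I n).

Definition den (A : ty) : term -> Prop :=
  fun t => forall I, interpretation I -> interp I A t.

Inductive fplus : ty -> Prop :=
| fp_var : forall n, fplus (TVar n)
| fp_arr : forall A B, fplus A -> fminus B -> fplus (Arr B A)
| fp_all : forall A, fplus A -> occurs_free 0 A -> fplus (All A)
with fminus : ty -> Prop :=
| fm_var : forall n, fminus (TVar n)
| fm_arr : forall A B, fminus A -> fplus B -> fminus (Arr B A).

Definition data_type (A : ty) : Prop :=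
  (exists t, den A t) /\
  (forall t, den A t -> exists t', betared t t' /\ closed t').

(* Adequacy of the realizability semantics gives u in |A|.  For t in |A|, take
   m above every free index of t and interpret every type variable by the
   saturated set N of terms that beta-reduce to a term whose free indices are
   all >= m.  By induction on the classes forall+ / forall-, |A|_N is included
   in N for A in forall+, and every neutral term x c1 ... cn with x >= m and
   ci in N lies in |B|_N for B in forall-; the arrow case feeds a fresh variable
   x to t and peels it off again, since if t x reduces into N so does t.  Hence
   t reduces to a term whose free indices are >= m; as beta-reduction creates
   no free variable, they are also < m, so that term is closed. *)
From Stdlib Require Import Arith Lia List Relations.

Ltac index_cases :=
  repeat (simpl; match goal with
  | |- context [?a <? ?b] => destruct (Nat.ltb_spec a b)
  | |- context [?a =? ?b] => destruct (Nat.eqb_spec a b)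
  end); simpl; try (exfalso; lia); try reflexivity; try (f_equal; lia).

Lemma lift_zero : forall t c, lift 0 c t = t.
Proof. induction t; intros c; simpl; [index_cases | congruence | congruence]. Qed.

Lemma lift_lift : forall v c c' k d, c' <= c -> c <= c' + k ->
  lift d c (lift k c' v) = lift (k + d) c' v.
Proof.
  induction v; intros c c' k d H1 H2; simpl.
  - index_cases.
  - rewrite IHv1, IHv2; auto.
  - rewrite IHv; auto; lia.
Qed.

Lemma subst_lift_gap : forall v w c i d, c <= i -> i < c + d ->
  subst i w (lift d c v) = lift (d - 1) c v.
Proof.
  induction v; intros w c i d H1 H2; simpl.
  - index_cases.
  - rewrite IHv1, IHv2; auto.
  - rewrite IHv; auto; lia.
Qed.

Lemma lift_subst : forall v u c k d, c <= k ->
  lift d c (subst k v u) = subst (k + d) v (lift d c u).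
Proof.
  intros v; induction u; intros c k d H; simpl.
  - index_cases. subst. rewrite lift_lift; auto; lia.
  - rewrite IHu1, IHu2; auto.
  - rewrite IHu; auto; lia.
Qed.

Lemma subst_subst : forall v u t j k,
  subst (j + k) v (subst j u t) = subst j (subst k v u) (subst (S (j + k)) v t).
Proof.
  intros v u; induction t; intros j k; simpl.
  - index_cases.
    + subst. rewrite lift_subst by lia. f_equal; lia.
    + subst. rewrite subst_lift_gap by lia. f_equal; lia.
  - rewrite IHt1, IHt2; auto.
  - f_equal; apply (IHt (S j) k).
Qed.

Fixpoint psubst (s : nat -> term) (k : nat) (t : term) : term :=
  match t with
  | Var n => if n <? k then Var n else lift k 0 (s (n - k))
  | App a b => App (psubst s k a) (psubst s k b)
  | Lam a => Lam (psubst s (S k) a)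
  end.

Definition tcons (v : term) (s : nat -> term) : nat -> term :=
  fun n => match n with 0 => v | S n => s n end.

Lemma psubst_var : forall t k, psubst Var k t = t.
Proof.
  induction t; intros k; simpl.
  - index_cases.
  - rewrite IHt1, IHt2; auto.
  - rewrite IHt; auto.
Qed.

Lemma subst_psubst : forall v s t k, subst k v (psubst s (S k) t) = psubst (tcons v s) k t.
Proof.
  intros v s; induction t; intros k; simpl.
  - index_cases.
    + subst. rewrite Nat.sub_diag. reflexivity.
    + rewrite subst_lift_gap by lia. replace (n - k) with (S (n - S k)) by lia.
      simpl. rewrite Nat.sub_0_r. reflexivity.
  - rewrite IHt1, IHt2; auto.
  - rewrite IHt; auto.
Qed.

Lemma interp_ext : forall A I J, (forall n t, I n t <-> J n t) ->
  forall t, interp I A t <-> interp J A t.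
Proof.
  induction A; intros I J H t; simpl.
  - apply H.
  - unfold arrow_set. split; intros Hu v Hv;
      apply (IHA2 I J H), Hu, (IHA1 I J H), Hv.
  - split; intros Hu G HG.
    + apply (IHA (scons G I)); [|auto]. intros [|n] w; simpl; [tauto | apply H].
    + apply (IHA (scons G I) (scons G J)); [|auto]. intros [|n] w; simpl; [tauto | apply H].
Qed.

Lemma interp_tlift : forall A c d I t,
  interp I (tlift d c A) t <-> interp (fun n => if n <? c then I n else I (n + d)) A t.
Proof.
  induction A; intros c d I t; simpl.
  - destruct (n <? c); tauto.
  - unfold arrow_set. split; intros Hu v Hv; apply IHA2, Hu, IHA1, Hv.
  - assert (E : forall G n w,
      scons G (fun n => if n <? c then I n else I (n + d)) n w <->
      (if n <? S c then scons G I n else scons G I (n + d)) w).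
    { intros G [|n] w; [simpl; tauto|].
      change (S n <? S c) with (n <? c). simpl. destruct (n <? c); tauto. }
    split; intros Hu G HG; specialize (Hu G HG).
    + apply IHA in Hu. revert Hu. apply interp_ext. intros n w. rewrite E. tauto.
    + apply IHA. revert Hu. apply interp_ext. intros n w. rewrite E. tauto.
Qed.

Lemma interp_tsubst : forall A k C I t,
  interp I (tsubst k C A) t <->
  interp (fun n => if n <? k then I n
                   else if n =? k then interp (fun m => I (m + k)) C
                   else I (n - 1)) A t.
Proof.
  induction A; intros k C I t; simpl.
  - destruct (n <? k); [tauto|]. destruct (n =? k); [|tauto].
    rewrite interp_tlift. apply interp_ext. intros m w. simpl. tauto.
  - unfold arrow_set. split; intros Hu v Hv; apply IHA2, Hu, IHA1, Hv.
  - assert (E : forall G n w,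
      scons G (fun n => if n <? k then I n
                        else if n =? k then interp (fun m => I (m + k)) C
                        else I (n - 1)) n w <->
      (if n <? S k then scons G I n
       else if n =? S k then interp (fun m => scons G I (m + S k)) C
       else scons G I (n - 1)) w).
    { intros G [|n] w; [simpl; tauto|].
      change (S n <? S k) with (n <? k); change (S n =? S k) with (n =? k).
      cbn [scons].
      destruct (n <? k) eqn:E1; [tauto|]. destruct (n =? k) eqn:E2.
      - apply interp_ext. intros m w'. rewrite Nat.add_succ_r. simpl. tauto.
      - apply Nat.ltb_ge in E1; apply Nat.eqb_neq in E2.
        destruct n; [lia|]. simpl. rewrite Nat.sub_0_r. tauto. }
    split; intros Hu G HG; specialize (Hu G HG).
    + apply IHA in Hu. revert Hu. apply interp_ext. intros n w. rewrite E. tauto.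
    + apply IHA. revert Hu. apply interp_ext. intros n w. rewrite E. tauto.
Qed.

Lemma whred_appl : forall t t' v, whred t t' -> whred (App t v) (App t' v).
Proof.
  intros t t' v H; induction H.
  - apply rt_step; constructor; auto.
  - apply rt_refl.
  - eapply rt_trans; eauto.
Qed.

Lemma interpretation_scons : forall G I,
  saturated G -> interpretation I -> interpretation (scons G I).
Proof. intros G I HG HI [|n]; simpl; auto. Qed.

Lemma interp_saturated : forall A I, interpretation I -> saturated (interp I A).
Proof.
  induction A; intros I HI; simpl.
  - apply HI.
  - intros t u Hu Htu v Hv. apply (IHA2 I HI _ (App u v)); auto. apply whred_appl; auto.
  - intros t u Hu Htu G HG.
    apply (IHA (scons G I) (interpretation_scons G I HG HI) t u); auto.
Qed.

Lemma typing_interp : forall G t A, typing G t A -> forall I s, interpretation I ->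
  (forall i B, nth_error G i = Some B -> interp I B (s i)) ->
  interp I A (psubst s 0 t).
Proof.
  intros G t A H; induction H; intros I s HI Hs.
  - simpl. rewrite lift_zero, Nat.sub_0_r. auto.
  - simpl. intros v Hv. apply (interp_saturated C I HI _ (psubst (tcons v s) 0 t)).
    + apply IHtyping; auto. intros [|i] B' E; simpl in *; [congruence | auto].
    + apply rt_step. rewrite <- subst_psubst. constructor.
  - apply (IHtyping1 I s HI Hs), (IHtyping2 I s HI Hs).
  - simpl. intros G0 HG0. apply IHtyping; [apply interpretation_scons; auto|].
    intros i B E. rewrite nth_error_map in E.
    destruct (nth_error G i) as [B0|] eqn:E0; simpl in E; [|discriminate].
    injection E; intros; subst. apply interp_tlift.
    generalize (Hs i B0 E0). apply interp_ext. intros n u.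
    rewrite Nat.add_1_r. simpl. tauto.
  - apply interp_tsubst. generalize (IHtyping I s HI Hs (interp I C) (interp_saturated C I HI)).
    apply interp_ext. intros [|n] u; simpl.
    + apply interp_ext. intros m w. rewrite Nat.add_0_r. tauto.
    + rewrite Nat.sub_0_r. tauto.
Qed.

Lemma typing_nil_den : forall t A, typing nil t A -> den A t.
Proof.
  intros t A H I HI. rewrite <- (psubst_var t 0).
  apply (typing_interp nil t A H I Var HI). intros [|i] B E; discriminate.
Qed.

Fixpoint fv_in (W : nat -> Prop) (k : nat) (t : term) : Prop :=
  match t with
  | Var m => m < k \/ W (m - k)
  | App a b => fv_in W k a /\ fv_in W k b
  | Lam a => fv_in W (S k) a
  end.

Lemma fv_in_lift : forall W k d u c n n', n = k + c -> n' = n + d ->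
  fv_in W n u -> fv_in W n' (lift d c u).
Proof.
  intros W k d; induction u; intros c m m' E1 E2 H; simpl in *.
  - destruct (Nat.ltb_spec n c); simpl; [left; lia|].
    destruct H; [left; lia | right; replace (n + d - m') with (n - m) by lia; auto].
  - destruct H; split; eauto.
  - apply (IHu (S c) (S m)); auto; lia.
Qed.

Lemma fv_in_subst : forall W k u, fv_in W k u -> forall t j n m, n = k + S j -> m = k + j ->
  fv_in W n t -> fv_in W m (subst j u t).
Proof.
  intros W k u Hu; induction t; intros j n' m E1 E2 H; simpl in *.
  - destruct (Nat.ltb_spec n j); simpl; [left; lia|].
    destruct (Nat.eqb_spec n j); simpl.
    + apply (fv_in_lift W k j u 0 k); auto; lia.
    + destruct H; [left; lia | right; replace (n - 1 - m) with (n - n') by lia; auto].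
  - destruct H; split; eauto.
  - apply (IHt (S j) (S n')); auto; lia.
Qed.

Lemma fv_in_bstep : forall W t t', bstep t t' -> forall k, fv_in W k t -> fv_in W k t'.
Proof.
  intros W t t' H; induction H; intros k Hk; simpl in *.
  - destruct Hk as [Ht Hu]. apply (fv_in_subst W k u Hu t 0 (S k) k); auto; lia.
  - destruct Hk; split; auto.
  - destruct Hk; split; auto.
  - auto.
Qed.

Lemma fv_in_betared : forall W t t', betared t t' -> forall k, fv_in W k t -> fv_in W k t'.
Proof. intros W t t' H; induction H; intros; eauto using fv_in_bstep. Qed.

Lemma fv_in_subst_var : forall W x b k, fv_in W k (subst k (Var x) b) -> fv_in W (S k) b.
Proof.
  intros W x; induction b; intros k H; simpl in *.
  - destruct (Nat.ltb_spec n k); simpl in *; [left; lia|].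
    destruct (Nat.eqb_spec n k); simpl in *; [left; lia|].
    destruct H; [left; lia | right; replace (n - S k) with (n - 1 - k) by lia; auto].
  - destruct H; split; eauto.
  - eauto.
Qed.

Lemma closed_at_fv_in : forall m t n k, n = k + m -> closed_at n t ->
  fv_in (fun i => i < m) k t.
Proof.
  intros m; induction t; intros n' k E H; simpl in *.
  - destruct (Nat.ltb_spec n k); [left | right]; lia.
  - destruct H; split; eauto.
  - apply (IHt (S n')); auto; lia.
Qed.

Lemma fv_in_disjoint_closed_at : forall (W1 W2 : nat -> Prop),
  (forall i, W1 i -> W2 i -> False) ->
  forall t k, fv_in W1 k t -> fv_in W2 k t -> closed_at k t.
Proof.
  intros W1 W2 HW; induction t; intros k H1 H2; simpl in *.
  - destruct H1, H2; eauto; exfalso; eauto.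
  - destruct H1, H2; split; eauto.
  - eauto.
Qed.

Lemma closed_at_mono : forall t a b, closed_at a t -> a <= b -> closed_at b t.
Proof.
  induction t; intros a b H Hab; simpl in *.
  - lia.
  - destruct H; split; eauto.
  - apply (IHt (S a)); auto; lia.
Qed.

Lemma closed_at_exists : forall t, exists m, closed_at m t.
Proof.
  induction t as [n | t1 [a Ha] t2 [b Hb] | t [a Ha]].
  - exists (S n); simpl; lia.
  - exists (a + b); simpl.
    split; [apply (closed_at_mono _ a) | apply (closed_at_mono _ b)]; auto; lia.
  - exists a. simpl. apply (closed_at_mono _ a); auto.
Qed.

Lemma betared_appl : forall t t' v, betared t t' -> betared (App t v) (App t' v).
Proof.
  intros t t' v H; induction H;
    [apply rt_step; constructor; auto | apply rt_refl | eapply rt_trans; eauto].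
Qed.

Lemma betared_appr : forall t v v', betared v v' -> betared (App t v) (App t v').
Proof.
  intros t v v' H; induction H;
    [apply rt_step; constructor; auto | apply rt_refl | eapply rt_trans; eauto].
Qed.

Lemma betared_lam : forall t t', betared t t' -> betared (Lam t) (Lam t').
Proof.
  intros t t' H; induction H;
    [apply rt_step; constructor; auto | apply rt_refl | eapply rt_trans; eauto].
Qed.

Lemma whred_betared : forall t u, whred t u -> betared t u.
Proof.
  intros t u H; induction H.
  - apply rt_step. induction H; constructor; auto.
  - apply rt_refl.
  - eapply rt_trans; eauto.
Qed.

(* A step of [b[x/k]] is the image of a step of [b]: a variable is never the
   head of a redex. *)
Lemma bstep_subst_var_inv : forall b k x s, bstep (subst k (Var x) b) s ->
  exists b', bstep b b' /\ s = subst k (Var x) b'.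
Proof.
  induction b; intros k x s H; simpl in H.
  - destruct (n <? k); [inversion H|]. destruct (n =? k); simpl in H; inversion H.
  - inversion H; subst.
    + destruct b1; simpl in H1.
      * destruct (n <? k); [discriminate|]. destruct (n =? k); simpl in H1; discriminate.
      * discriminate.
      * injection H1; intros; subst. exists (subst 0 b2 b1). split; [constructor|].
        symmetry. apply (subst_subst (Var x) b2 b1 0 k).
    + destruct (IHb1 _ _ _ H3) as [b' [Hb ->]]. exists (App b' b2). split; [constructor|]; auto.
    + destruct (IHb2 _ _ _ H3) as [b' [Hb ->]]. exists (App b1 b'). split; [constructor|]; auto.
  - inversion H; subst. destruct (IHb _ _ _ H1) as [b' [Hb ->]].
    exists (Lam b'). split; [constructor|]; auto.
Qed.

Lemma betared_subst_var_inv : forall k x b s, betared (subst k (Var x) b) s ->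
  exists b', betared b b' /\ s = subst k (Var x) b'.
Proof.
  intros k x b s H. apply clos_rt_rt1n in H.
  remember (subst k (Var x) b) as r eqn:E. revert b E.
  induction H as [r | r r' s Hstep _ IH]; intros b E.
  - exists b; split; [apply rt_refl | auto].
  - subst. destruct (bstep_subst_var_inv _ _ _ _ Hstep) as [b1 [Hb1 E1]].
    destruct (IH b1 E1) as [b2 [Hb2 ->]].
    exists b2; split; auto. eapply rt_trans; [apply rt_step|]; eauto.
Qed.

Definition reduces_into (W : nat -> Prop) : term -> Prop :=
  fun t => exists t', betared t t' /\ fv_in W 0 t'.

Lemma reduces_into_saturated : forall W, saturated (reduces_into W).
Proof.
  intros W t u [u' [Hu' Hf]] Htu. exists u'; split; auto.
  eapply rt_trans; [apply whred_betared|]; eauto.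
Qed.

(* Either the reduction of [t x] never fires the head redex, or [t] reduces
   to [Lam b] and [t x] continues as [b[x/0]]; in both cases the reduct of
   [t] can be read off. *)
Lemma reduces_into_app_var_inv : forall W t x,
  reduces_into W (App t (Var x)) -> reduces_into W t.
Proof.
  intros W t x [s [Hred Hf]]. apply clos_rt_rt1n in Hred.
  remember (App t (Var x)) as r eqn:E. revert t E.
  induction Hred as [r | r r' s Hstep Hrest IH]; intros t E; subst.
  - exists t; split; [apply rt_refl | apply Hf].
  - inversion Hstep; subst.
    + apply clos_rt1n_rt in Hrest.
      destruct (betared_subst_var_inv 0 x _ _ Hrest) as [b [Hb ->]].
      exists (Lam b). split; [apply betared_lam; auto|]. eapply fv_in_subst_var; eauto.
    + destruct (IH Hf t' eq_refl) as [t1 [Ht1 Hf1]].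
      exists t1; split; auto. eapply rt_trans; [apply rt_step|]; eauto.
    + match goal with Hx : bstep (Var x) _ |- _ => inversion Hx end.
Qed.

Inductive neutral (W : nat -> Prop) : term -> Prop :=
| ne_var : forall x, W x -> neutral W (Var x)
| ne_app : forall s c, neutral W s -> reduces_into W c -> neutral W (App s c).

Lemma neutral_reduces_into : forall W s, neutral W s -> reduces_into W s.
Proof.
  intros W s H; induction H as [x Hx | s c _ [s' [Hs Hfs]] [c' [Hc Hfc]]].
  - exists (Var x); split; [apply rt_refl|]. simpl. right. rewrite Nat.sub_0_r; auto.
  - exists (App s' c'). split; [|simpl; auto].
    eapply rt_trans; [apply betared_appl | apply betared_appr]; eauto.
Qed.

Scheme fplus_fminus_ind := Minimality for fplus Sort Prop
with fminus_fplus_ind := Minimality for fminus Sort Prop.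

Lemma fplus_interp_reduces_into : forall W x, W x ->
  forall A, fplus A -> forall I, (forall n, I n = reduces_into W) ->
  forall t, interp I A t -> reduces_into W t.
Proof.
  intros W x Hx.
  apply (fplus_fminus_ind
   (fun A => forall I, (forall n, I n = reduces_into W) ->
             forall t, interp I A t -> reduces_into W t)
   (fun B => forall I, (forall n, I n = reduces_into W) ->
             forall s, neutral W s -> interp I B s)).
  - intros n I HI t H. simpl in H. rewrite HI in H. auto.
  - intros A B _ IHA _ IHB I HI t H.
    apply (reduces_into_app_var_inv W t x), (IHA I HI), H, (IHB I HI).
    constructor; auto.
  - intros A _ IHA _ I HI t H.
    apply (IHA (scons (reduces_into W) I)); [intros [|n]; simpl; auto|].
    apply H, reduces_into_saturated.
  - intros n I HI s H. simpl. rewrite HI. apply neutral_reduces_into; auto.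
  - intros A B _ IHA _ IHB I HI s H c Hc.
    apply IHA; auto. constructor; auto. apply (IHB I HI); auto.
Qed.

Lemma fplus_den_betared_closed : forall A t, fplus A -> den A t ->
  exists t', betared t t' /\ closed t'.
Proof.
  intros A t HA Ht. destruct (closed_at_exists t) as [m Hm].
  set (W := fun i => m <= i).
  assert (HN : reduces_into W t).
  { apply (fplus_interp_reduces_into W m (le_n m) A HA (fun _ => reduces_into W)); auto.
    apply Ht. intros n. apply reduces_into_saturated. }
  destruct HN as [t' [Hred Hf]]. exists t'. split; auto.
  apply (fv_in_disjoint_closed_at W (fun i => i < m)); [unfold W; lia | auto |].
  apply (fv_in_betared _ t t' Hred). apply (closed_at_fv_in m t m 0); auto.
Qed.

Theorem theorem2p1p9 (A : ty) (u : term) :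
  tclosed A -> proper A -> fplus A ->
  closed u -> typing nil u A ->
  data_type A.
Proof.
  intros _ _ HA _ Hu. split.
  - exists u. apply typing_nil_den; auto.
  - intros t Ht. apply fplus_den_betared_closed with A; auto.
Qed.
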